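(* If $f:[-1,1]\to\mathbb{R}$ is $3$-convex, then \[ f\Bigl(-\tfrac{\sqrt3}{3}\Bigr)+f\Bigl(\tfrac{\sqrt3}{3}\Bigr)\;\le\;\tfrac{2}{3}\Bigl(f\bigl(-\tfrac{\sqrt2}{2}\bigr)+f(0)+f\bigl(\tfrac{\sqrt2}{2}\bigr)\Bigr)\;\le\;\int_{-1}^1 f(x)\,dx . \]
   Context: Divided differences are defined recursively by $[x_1;f]:=f(x_1)$ and $[x_1,\dots,x_{m+1};f]:=\frac{[x_2,\dots,x_{m+1};f]-[x_1,\dots,x_m;f]}{x_{m+1}-x_1}$ for pairwise distinct points. For $m\in\mathbb{N}$, a function $f$ on an interval $I$ is called $m$-convex if $[x_1,\dots,x_{m+2};f]\ge 0$ for all pairwise distinct $x_1,\dots,x_{m+2}\in I$. Integrals are Riemann integrals (an $m$-convex function on a compact interval is Riemann integrable). *)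

From Stdlib Require Import Reals.
From Coquelicot Require Import Coquelicot.
Open Scope R_scope.

(* divdiff f x i k = [x_i, x_{i+1}, ..., x_{i+k}; f], following the recursive
   definition [x_1;f] = f(x_1),
   [x_1..x_{m+1};f] = ([x_2..x_{m+1};f] - [x_1..x_m;f]) / (x_{m+1} - x_1). *)
Fixpoint divdiff (f : R -> R) (x : nat -> R) (i k : nat) : R :=
  match k with
  | O => f (x i)
  | S k' => (divdiff f x (S i) k' - divdiff f x i k') / (x (i + S k')%nat - x i)
  end.

Definition m_convex_on (m : nat) (a b : R) (f : R -> R) : Prop :=
  forall x : nat -> R,
    (forall i, (i < m + 2)%nat -> a <= x i <= b) ->
    (forall i j, (i < m + 2)%nat -> (j < m + 2)%nat -> i <> j -> x i <> x j) ->
    0 <= divdiff f x 0 (m + 1).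

From Stdlib Require Import Reals Lra Lia Classical FunctionalExtensionality.
From Coquelicot Require Import Coquelicot.
Open Scope R_scope.

(* A 3-convex function has nonnegative fourth divided differences, and these are
   the coefficients in the interpolation error
     f y - p y = [x0, x1, x2, x3, y; f] (y - x0) (y - x1) (y - x2) (y - x3)
   of the cubic interpolant p of f at x0, ..., x3.  So f lies above p wherever
   the nodal polynomial is positive.

   With a = sqrt 2 / 2 and b = sqrt 3 / 3, the divided difference
   [-a, -b, 0, b, a; f] is 9 times the middle term minus 9 times the left one.
   For the right inequality, let p and q interpolate f at -t, 0, t and at -a,
   resp. a (t = 7/10).  On the six pieces of [-1, 1] cut out by these nodes one
   of p, q lies below f; the three-point rule is exact on cubics and
   q - p = 2 a [-t, 0, t, -a, a; f] y (y^2 - t^2), so the remaining gap is a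
   nonnegative multiple of that divided difference.

   Riemann integrability: f is continuous inside the interval, being squeezed
   between two interpolants on either side of each point, and has one-sided
   limits at the ends, because the third divided difference with three fixed
   nodes is monotone in the fourth. *)

Definition distinct4 (x0 x1 x2 x3 : R) : Prop :=
  x0 <> x1 /\ x0 <> x2 /\ x0 <> x3 /\ x1 <> x2 /\ x1 <> x3 /\ x2 <> x3.

Definition distinct5 (x0 x1 x2 x3 x4 : R) : Prop :=
  distinct4 x0 x1 x2 x3 /\ x0 <> x4 /\ x1 <> x4 /\ x2 <> x4 /\ x3 <> x4.

Ltac nonzero_diffs :=
  repeat match goal with
  | H : distinct5 _ _ _ _ _ |- _ => destruct H as (H & ? & ? & ? & ?)
  | H : distinct4 _ _ _ _ |- _ => destruct H as (? & ? & ? & ? & ? & ?)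
  end;
  repeat split;
  first [ assumption | apply not_eq_sym; assumption
        | apply Rminus_eq_contra; first [assumption | apply not_eq_sym; assumption] ].

Definition divdiff3 (f : R -> R) x0 x1 x2 x3 :=
  f x0 / ((x0-x1)*(x0-x2)*(x0-x3)) + f x1 / ((x1-x0)*(x1-x2)*(x1-x3)) +
  f x2 / ((x2-x0)*(x2-x1)*(x2-x3)) + f x3 / ((x3-x0)*(x3-x1)*(x3-x2)).

Definition divdiff4 (f : R -> R) x0 x1 x2 x3 x4 :=
  f x0 / ((x0-x1)*(x0-x2)*(x0-x3)*(x0-x4)) +
  f x1 / ((x1-x0)*(x1-x2)*(x1-x3)*(x1-x4)) +
  f x2 / ((x2-x0)*(x2-x1)*(x2-x3)*(x2-x4)) +
  f x3 / ((x3-x0)*(x3-x1)*(x3-x2)*(x3-x4)) +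
  f x4 / ((x4-x0)*(x4-x1)*(x4-x2)*(x4-x3)).

Definition nodal3 (x0 x1 x2 y : R) := (y - x0) * (y - x1) * (y - x2).
Definition nodal4 (x0 x1 x2 x3 y : R) := (y - x0) * (y - x1) * (y - x2) * (y - x3).

Definition lagrange2 (f : R -> R) x0 x1 x2 y :=
  f x0 * ((y - x1) * (y - x2)) / ((x0 - x1) * (x0 - x2)) +
  f x1 * ((y - x0) * (y - x2)) / ((x1 - x0) * (x1 - x2)) +
  f x2 * ((y - x0) * (y - x1)) / ((x2 - x0) * (x2 - x1)).

Definition lagrange3 (f : R -> R) x0 x1 x2 x3 y :=
  f x0 * ((y-x1)*(y-x2)*(y-x3)) / ((x0-x1)*(x0-x2)*(x0-x3)) +
  f x1 * ((y-x0)*(y-x2)*(y-x3)) / ((x1-x0)*(x1-x2)*(x1-x3)) +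
  f x2 * ((y-x0)*(y-x1)*(y-x3)) / ((x2-x0)*(x2-x1)*(x2-x3)) +
  f x3 * ((y-x0)*(y-x1)*(y-x2)) / ((x3-x0)*(x3-x1)*(x3-x2)).

Lemma divdiff_4_explicit (f : R -> R) (x : nat -> R) :
  distinct5 (x 0%nat) (x 1%nat) (x 2%nat) (x 3%nat) (x 4%nat) ->
  divdiff f x 0 4 = divdiff4 f (x 0%nat) (x 1%nat) (x 2%nat) (x 3%nat) (x 4%nat).
Proof. intros. simpl. unfold divdiff4. field; nonzero_diffs. Qed.

Lemma lagrange2_error f x0 x1 x2 y : distinct4 x0 x1 x2 y ->
  f y = lagrange2 f x0 x1 x2 y + divdiff3 f x0 x1 x2 y * nodal3 x0 x1 x2 y.
Proof. intros. unfold lagrange2, divdiff3, nodal3. field; nonzero_diffs. Qed.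

Lemma lagrange3_nodes f x0 x1 x2 x3 : distinct4 x0 x1 x2 x3 ->
  lagrange3 f x0 x1 x2 x3 x0 = f x0 /\ lagrange3 f x0 x1 x2 x3 x1 = f x1 /\
  lagrange3 f x0 x1 x2 x3 x2 = f x2 /\ lagrange3 f x0 x1 x2 x3 x3 = f x3.
Proof. intros. unfold lagrange3. repeat split; field; nonzero_diffs. Qed.

Lemma lagrange3_error f x0 x1 x2 x3 y : distinct5 x0 x1 x2 x3 y ->
  f y = lagrange3 f x0 x1 x2 x3 y + divdiff4 f x0 x1 x2 x3 y * nodal4 x0 x1 x2 x3 y.
Proof. intros. unfold lagrange3, divdiff4, nodal4. field; nonzero_diffs. Qed.

Lemma lagrange3_newton f x0 x1 x2 y z : distinct4 x0 x1 x2 y ->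
  lagrange3 f x0 x1 x2 y z = lagrange2 f x0 x1 x2 z + divdiff3 f x0 x1 x2 y * nodal3 x0 x1 x2 z.
Proof. intros. unfold lagrange3, lagrange2, divdiff3, nodal3. field; nonzero_diffs. Qed.

Lemma divdiff3_sub f x0 x1 x2 y z : distinct5 x0 x1 x2 y z ->
  divdiff3 f x0 x1 x2 z - divdiff3 f x0 x1 x2 y = divdiff4 f x0 x1 x2 y z * (z - y).
Proof.
  intros Hd.
  assert (Hz : distinct4 x0 x1 x2 z) by nonzero_diffs.
  assert (Hy : distinct4 x0 x1 x2 y) by nonzero_diffs.
  assert (W : nodal3 x0 x1 x2 z <> 0).
  { unfold nodal3. destruct Hz as (_ & _ & ? & _ & ? & ?).
    repeat apply Rmult_integral_contrapositive_currified; apply Rminus_eq_contra; auto. }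
  assert (E2 := lagrange2_error f x0 x1 x2 z Hz).
  assert (E3 := lagrange3_error f x0 x1 x2 y z Hd).
  rewrite lagrange3_newton in E3 by exact Hy.
  replace (nodal4 x0 x1 x2 y z) with (nodal3 x0 x1 x2 z * (z - y)) in E3
    by (unfold nodal3, nodal4; ring).
  apply (Rmult_eq_reg_r (nodal3 x0 x1 x2 z)); [|exact W]. lra.
Qed.

Lemma lagrange3_change_node f x0 x1 x2 y z w : distinct5 x0 x1 x2 y z ->
  lagrange3 f x0 x1 x2 z w =
  lagrange3 f x0 x1 x2 y w + (z - y) * divdiff4 f x0 x1 x2 y z * nodal3 x0 x1 x2 w.
Proof.
  intros Hd.
  rewrite !lagrange3_newton by nonzero_diffs.
  replace ((z - y) * divdiff4 f x0 x1 x2 y z) with (divdiff4 f x0 x1 x2 y z * (z - y)) by ring.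
  rewrite <- divdiff3_sub by exact Hd. ring.
Qed.

Lemma divdiff4_symmetric_nodes f u v : 0 < v < u ->
  divdiff4 f (- u) (- v) 0 v u =
  (f (- u) + f u) / (2 * (u * u) * (u * u - v * v)) -
  (f (- v) + f v) / (2 * (v * v) * (u * u - v * v)) + f 0 / ((u * u) * (v * v)).
Proof. intros. unfold divdiff4. field. repeat split; nra. Qed.

Lemma ball_R (x e y : R) : ball x e y <-> Rabs (y - x) < e.
Proof. reflexivity. Qed.

Lemma continuous_squeeze (f l u : R -> R) x :
  continuous l x -> continuous u x -> l x = f x -> u x = f x ->
  locally x (fun y => (f y - l y) * (f y - u y) <= 0) -> continuous f x.
Proof.
  intros Hl Hu El Eu Hb. apply filterlim_locally. intros eps.
  generalize (filter_and _ _ Hb (filter_and _ _ (proj1 (filterlim_locally _ _) Hl eps)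
                                              (proj1 (filterlim_locally _ _) Hu eps))).
  apply filter_imp. intros y (Hy & Ly & Uy).
  rewrite ball_R, El in Ly. rewrite ball_R, Eu in Uy. apply ball_R.
  apply Rabs_def2 in Ly. apply Rabs_def2 in Uy.
  apply Rabs_def1; destruct (Rle_dec (f y) (l y)); nra.
Qed.

Lemma increasing_ex_lim_left (h : R -> R) c b M : c < b ->
  (forall y z, c < y -> y < z -> z < b -> h y <= h z) ->
  (forall y, c < y < b -> h y <= M) ->
  exists L, filterlim h (at_left b) (locally L).
Proof.
  intros Hcb Hinc HM.
  set (E := fun v => exists y, c < y < b /\ v = h y).
  destruct (completeness E) as [L [HL HLmin]].
  - exists M. intros v [y [Hy ->]]. apply HM, Hy.
  - exists (h ((c + b) / 2)), ((c + b) / 2). split; [lra | reflexivity].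
  - exists L. apply filterlim_locally. intros eps.
    assert (Hy0 : exists y0, c < y0 < b /\ L - eps < h y0).
    { apply NNPP. intros Hn.
      assert (L <= L - eps) by (apply HLmin; intros v [y [Hy ->]];
        apply Rnot_lt_le; intros Hlt; apply Hn; exists y; split; assumption).
      destruct eps; simpl in *; lra. }
    destruct Hy0 as [y0 [Hy0 Hlt]].
    exists (mkposreal (b - y0) ltac:(lra)). intros y Hy Hyb.
    rewrite ball_R in Hy. simpl in Hy. apply Rabs_def2 in Hy. apply ball_R.
    assert (h y0 <= h y) by (apply Hinc; lra).
    assert (h y <= L) by (apply HL; exists y; split; [lra | reflexivity]).
    apply Rabs_def1; lra.
Qed.

Lemma increasing_ex_lim_right (h : R -> R) a c m : a < c ->
  (forall y z, a < y -> y < z -> z < c -> h y <= h z) ->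
  (forall y, a < y < c -> m <= h y) ->
  exists L, filterlim h (at_right a) (locally L).
Proof.
  intros Hac Hinc Hm.
  destruct (increasing_ex_lim_left (fun x => - h (- x)) (- c) (- a) (- m)) as [L HL].
  - lra.
  - intros y z Hy Hyz Hz. apply Ropp_le_contravar, Hinc; lra.
  - intros y Hy. apply Ropp_le_contravar, Hm; lra.
  - exists (- L).
    apply (filterlim_ext (fun x => opp (- h (- - x)))).
    { intros x. unfold opp; simpl. rewrite !Ropp_involutive. reflexivity. }
    eapply filterlim_comp; [| apply (filterlim_opp L)].
    apply (filterlim_comp _ _ _ Ropp (fun u => - h (- u)) _ (at_left (- a)));
      [apply filterlim_Ropp_right | exact HL].
Qed.

Lemma ex_RInt_continuous_open (f : R -> R) a b la lb : a < b ->
  (forall c, a < c < b -> continuous f c) ->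
  filterlim f (at_right a) (locally la) -> filterlim f (at_left b) (locally lb) ->
  ex_RInt f a b.
Proof.
  intros Hab Hc Ha Hb.
  destruct (C0_extension_lt f la lb a b Hab Hc Ha Hb) as [g [Hg [Egf _]]].
  apply (ex_RInt_ext g).
  - rewrite Rmin_left, Rmax_right by lra. exact Egf.
  - apply (ex_RInt_continuous (V := R_CompleteNormedModule)). intros z _. apply Hg.
Qed.

Lemma continuous_lagrange2 f x0 x1 x2 y : continuous (lagrange2 f x0 x1 x2) y.
Proof.
  assert (H : ex_derive (lagrange2 f x0 x1 x2) y) by (unfold lagrange2; auto_derive; auto).
  exact (ex_derive_continuous _ _ H).
Qed.

Lemma continuous_lagrange3 f x0 x1 x2 x3 y : continuous (lagrange3 f x0 x1 x2 x3) y.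
Proof.
  assert (H : ex_derive (lagrange3 f x0 x1 x2 x3) y) by (unfold lagrange3; auto_derive; auto).
  exact (ex_derive_continuous _ _ H).
Qed.

Lemma continuous_nodal3 x0 x1 x2 y : continuous (nodal3 x0 x1 x2) y.
Proof.
  assert (H : ex_derive (nodal3 x0 x1 x2) y) by (unfold nodal3; auto_derive; auto).
  exact (ex_derive_continuous _ _ H).
Qed.

Lemma nodal4_neq0_distinct x0 x1 x2 x3 y : nodal4 x0 x1 x2 x3 y <> 0 ->
  x0 <> y /\ x1 <> y /\ x2 <> y /\ x3 <> y.
Proof. unfold nodal4. intros H. repeat split; intros ->; apply H; ring. Qed.

Lemma nodal4_opposite_sides x0 d y : 0 < d -> Rabs (y - x0) < d ->
  nodal4 x0 (x0 - d) (x0 - 2 * d) (x0 - 3 * d) y *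
  nodal4 x0 (x0 + d) (x0 + 2 * d) (x0 + 3 * d) y <= 0.
Proof.
  intros Hd Hy. apply Rabs_def2 in Hy.
  set (s := y - x0).
  assert (P : 0 < (d * d - s * s) * (4 * d * d - s * s) * (9 * d * d - s * s)).
  { unfold s. repeat apply Rmult_lt_0_compat; nra. }
  replace (nodal4 x0 (x0 - d) (x0 - 2 * d) (x0 - 3 * d) y *
           nodal4 x0 (x0 + d) (x0 + 2 * d) (x0 + 3 * d) y)
    with (- (s * s) * ((d * d - s * s) * (4 * d * d - s * s) * (9 * d * d - s * s)))
    by (unfold nodal4, s; ring).
  assert (0 <= s * s) by apply Rle_0_sqr. nra.
Qed.

Lemma filterlim_lagrange2_error f x0 x1 x2 (F : (R -> Prop) -> Prop) {FF : Filter F} e L :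
  filter_le F (locally e) -> F (fun y => distinct4 x0 x1 x2 y) ->
  filterlim (divdiff3 f x0 x1 x2) F (locally L) ->
  filterlim f F (locally (lagrange2 f x0 x1 x2 e + L * nodal3 x0 x1 x2 e)).
Proof.
  intros Hle Hd Hh.
  apply (filterlim_ext_loc (fun y => lagrange2 f x0 x1 x2 y + divdiff3 f x0 x1 x2 y * nodal3 x0 x1 x2 y)).
  { apply (filter_imp _ _ (fun y Hy => eq_sym (lagrange2_error f x0 x1 x2 y Hy)) Hd). }
  eapply filterlim_comp_2; [| | apply (filterlim_plus (V := R_NormedModule))].
  - exact (filterlim_filter_le_1 _ Hle (continuous_lagrange2 f x0 x1 x2 e)).
  - eapply filterlim_comp_2; [exact Hh | | apply (filterlim_mult (K := R_AbsRing))].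
    exact (filterlim_filter_le_1 _ Hle (continuous_nodal3 x0 x1 x2 e)).
Qed.

Ltac interval_facts :=
  unfold distinct4, distinct5; repeat split;
  first [ assumption | apply not_eq_sym; assumption | intro; lra | lra ].

Section ThreeConvex.

Variables (a b : R) (f : R -> R).
Hypothesis hf : m_convex_on 3 a b f.

Lemma divdiff4_nonneg x0 x1 x2 x3 x4 :
  a <= x0 <= b -> a <= x1 <= b -> a <= x2 <= b -> a <= x3 <= b -> a <= x4 <= b ->
  distinct5 x0 x1 x2 x3 x4 -> 0 <= divdiff4 f x0 x1 x2 x3 x4.
Proof.
  intros H0 H1 H2 H3 H4 Hd.
  set (x := fun i : nat => match i with 0 => x0 | 1 => x1 | 2 => x2 | 3 => x3 | _ => x4 end%nat).
  change (0 <= divdiff4 f (x 0%nat) (x 1%nat) (x 2%nat) (x 3%nat) (x 4%nat)).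
  rewrite <- (divdiff_4_explicit f x Hd). apply hf.
  - intros [|[|[|[|[|i]]]]] Hi; assumption.
  - destruct Hd as ((? & ? & ? & ? & ? & ?) & ? & ? & ? & ?).
    intros [|[|[|[|[|i]]]]] [|[|[|[|[|j]]]]] Hi Hj Hij; simpl;
      first [ exfalso; lia | congruence | assumption | apply not_eq_sym; assumption ].
Qed.

Lemma lagrange3_gap x0 x1 x2 x3 y :
  a <= x0 <= b -> a <= x1 <= b -> a <= x2 <= b -> a <= x3 <= b -> a <= y <= b ->
  distinct5 x0 x1 x2 x3 y ->
  exists D, 0 <= D /\ f y - lagrange3 f x0 x1 x2 x3 y = D * nodal4 x0 x1 x2 x3 y.
Proof.
  intros H0 H1 H2 H3 Hy Hd.
  exists (divdiff4 f x0 x1 x2 x3 y). split; [apply divdiff4_nonneg; assumption |].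
  assert (E := lagrange3_error f x0 x1 x2 x3 y Hd). lra.
Qed.

Lemma lagrange3_le x0 x1 x2 x3 y :
  a <= x0 <= b -> a <= x1 <= b -> a <= x2 <= b -> a <= x3 <= b -> a <= y <= b ->
  distinct4 x0 x1 x2 x3 -> 0 < nodal4 x0 x1 x2 x3 y -> lagrange3 f x0 x1 x2 x3 y <= f y.
Proof.
  intros H0 H1 H2 H3 Hy Hd Hpos.
  destruct (lagrange3_gap x0 x1 x2 x3 y) as (D & HD & G); try assumption.
  - split; [exact Hd | apply nodal4_neq0_distinct; lra].
  - nra.
Qed.

Lemma continuous_interior x0 : a < x0 < b -> continuous f x0.
Proof.
  intros Hx.
  set (d := Rmin (x0 - a) (b - x0) / 3).
  assert (Hd : 0 < d) by (apply Rdiv_lt_0_compat; [apply Rmin_glb_lt |]; lra).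
  assert (Hab : a <= x0 - 3 * d /\ x0 + 3 * d <= b).
  { assert (Hl := Rmin_l (x0 - a) (b - x0)). assert (Hr := Rmin_r (x0 - a) (b - x0)).
    unfold d. lra. }
  set (pL := lagrange3 f x0 (x0 - d) (x0 - 2 * d) (x0 - 3 * d)).
  set (pR := lagrange3 f x0 (x0 + d) (x0 + 2 * d) (x0 + 3 * d)).
  destruct (lagrange3_nodes f x0 (x0 - d) (x0 - 2 * d) (x0 - 3 * d)) as [EL _]; [interval_facts |].
  destruct (lagrange3_nodes f x0 (x0 + d) (x0 + 2 * d) (x0 + 3 * d)) as [ER _]; [interval_facts |].
  apply (continuous_squeeze f pL pR); [apply continuous_lagrange3 .. | exact EL | exact ER |].
  exists (mkposreal d Hd). intros y Hy. rewrite ball_R in Hy. simpl in Hy.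
  assert (S := nodal4_opposite_sides x0 d y Hd Hy). apply Rabs_def2 in Hy.
  destruct (Req_dec y x0) as [-> | Hne]; [unfold pL; rewrite EL; lra |].
  destruct (lagrange3_gap x0 (x0 - d) (x0 - 2 * d) (x0 - 3 * d) y) as (DL & HDL & GL);
    [interval_facts .. |].
  destruct (lagrange3_gap x0 (x0 + d) (x0 + 2 * d) (x0 + 3 * d) y) as (DR & HDR & GR);
    [interval_facts .. |].
  unfold pL, pR. rewrite GL, GR.
  assert (0 <= DL * DR) by (apply Rmult_le_pos; assumption).
  nra.
Qed.

Lemma divdiff3_increasing x0 x1 x2 y z :
  a <= x0 <= b -> a <= x1 <= b -> a <= x2 <= b -> a <= y <= b -> a <= z <= b ->
  distinct5 x0 x1 x2 y z -> y < z -> divdiff3 f x0 x1 x2 y <= divdiff3 f x0 x1 x2 z.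
Proof.
  intros H0 H1 H2 Hy Hz Hd Hyz.
  assert (Hsub := divdiff3_sub f x0 x1 x2 y z Hd).
  assert (0 <= divdiff4 f x0 x1 x2 y z * (z - y))
    by (apply Rmult_le_pos; [apply divdiff4_nonneg | lra]; assumption).
  lra.
Qed.

Lemma ex_lim_endpoints : a < b ->
  (exists la, filterlim f (at_right a) (locally la)) /\
  (exists lb, filterlim f (at_left b) (locally lb)).
Proof.
  intros Hab.
  set (c1 := a + (b - a) / 4). set (c2 := a + (b - a) / 2). set (c3 := a + 3 * (b - a) / 4).
  assert (Hc : a < c1 < c2 /\ c2 < c3 < b) by (unfold c1, c2, c3; lra).
  set (h := divdiff3 f c1 c2 c3).
  assert (Hinc : forall y z, a <= y -> y < z -> z <= b ->
                 y < c1 \/ c3 < y -> z < c1 \/ c3 < z -> h y <= h z).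
  { intros y z Hy Hyz Hz Ny Nz. apply divdiff3_increasing; interval_facts. }
  split.
  - destruct (increasing_ex_lim_right h a c1 (h a)) as [L HL];
      [lra | intros; apply Hinc; lra | intros; apply Hinc; lra |].
    exists (lagrange2 f c1 c2 c3 a + L * nodal3 c1 c2 c3 a).
    apply (filterlim_lagrange2_error f c1 c2 c3 (at_right a) a L); [apply filter_le_within | | exact HL].
    exists (mkposreal (c1 - a) ltac:(lra)). intros y Hy Hay.
    rewrite ball_R in Hy. simpl in Hy. apply Rabs_def2 in Hy. interval_facts.
  - destruct (increasing_ex_lim_left h c3 b (h b)) as [L HL];
      [lra | intros; apply Hinc; lra | intros; apply Hinc; lra |].
    exists (lagrange2 f c1 c2 c3 b + L * nodal3 c1 c2 c3 b).
    apply (filterlim_lagrange2_error f c1 c2 c3 (at_left b) b L); [apply filter_le_within | | exact HL].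
    exists (mkposreal (b - c3) ltac:(lra)). intros y Hy Hyb.
    rewrite ball_R in Hy. simpl in Hy. apply Rabs_def2 in Hy. interval_facts.
Qed.

Lemma ex_RInt_m_convex3 l r : a < b -> a <= l -> l <= r -> r <= b -> ex_RInt f l r.
Proof.
  intros Hab Hl Hlr Hr.
  destruct (ex_lim_endpoints Hab) as [[la Ha] [lb Hb]].
  assert (Hf := ex_RInt_continuous_open f a b la lb Hab continuous_interior Ha Hb).
  apply (ex_RInt_Chasles_1 f l r b); [lra|].
  apply (ex_RInt_Chasles_2 f a l b); [lra | exact Hf].
Qed.

Lemma RInt_lagrange3_le x0 x1 x2 x3 l r : a < b ->
  a <= x0 <= b -> a <= x1 <= b -> a <= x2 <= b -> a <= x3 <= b -> distinct4 x0 x1 x2 x3 ->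
  a <= l -> l <= r -> r <= b -> (forall y, l < y < r -> 0 < nodal4 x0 x1 x2 x3 y) ->
  RInt (lagrange3 f x0 x1 x2 x3) l r <= RInt f l r.
Proof.
  intros Hab H0 H1 H2 H3 Hd Hl Hlr Hr Hpos. apply RInt_le; [exact Hlr | | |].
  - apply (ex_RInt_continuous (V := R_CompleteNormedModule)). intros; apply continuous_lagrange3.
  - apply ex_RInt_m_convex3; assumption.
  - intros y Hy. apply lagrange3_le; try lra; auto.
Qed.

Lemma RInt_split_m_convex3 l m r : a < b -> a <= l -> l <= m -> m <= r -> r <= b ->
  RInt f l r = RInt f l m + RInt f m r.
Proof.
  intros. symmetry. apply (RInt_Chasles f l m r); apply ex_RInt_m_convex3; lra.
Qed.

End ThreeConvex.

Definition cubic (c0 c1 c2 c3 y : R) := c0 + c1 * y + c2 * y ^ 2 + c3 * y ^ 3.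
Definition cubic_primitive (c0 c1 c2 c3 y : R) :=
  c0 * y + c1 * y ^ 2 / 2 + c2 * y ^ 3 / 3 + c3 * y ^ 4 / 4.

Lemma RInt_cubic c0 c1 c2 c3 l r :
  RInt (cubic c0 c1 c2 c3) l r = cubic_primitive c0 c1 c2 c3 r - cubic_primitive c0 c1 c2 c3 l.
Proof.
  apply is_RInt_unique.
  apply (is_RInt_derive (V := R_CompleteNormedModule) (cubic_primitive c0 c1 c2 c3)).
  - intros x _. unfold cubic_primitive, cubic. auto_derive; [auto | field].
  - intros x _. assert (H : ex_derive (cubic c0 c1 c2 c3) x) by (unfold cubic; auto_derive; auto).
    exact (ex_derive_continuous _ _ H).
Qed.

Lemma lagrange3_cubic f x0 x1 x2 x3 :
  exists c0 c1 c2 c3, lagrange3 f x0 x1 x2 x3 = cubic c0 c1 c2 c3.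
Proof.
  set (w0 := f x0 / ((x0-x1)*(x0-x2)*(x0-x3))).
  set (w1 := f x1 / ((x1-x0)*(x1-x2)*(x1-x3))).
  set (w2 := f x2 / ((x2-x0)*(x2-x1)*(x2-x3))).
  set (w3 := f x3 / ((x3-x0)*(x3-x1)*(x3-x2))).
  exists (- (w0*x1*x2*x3 + w1*x0*x2*x3 + w2*x0*x1*x3 + w3*x0*x1*x2)),
    (w0*(x1*x2+x1*x3+x2*x3) + w1*(x0*x2+x0*x3+x2*x3) + w2*(x0*x1+x0*x3+x1*x3) + w3*(x0*x1+x0*x2+x1*x2)),
    (- (w0*(x1+x2+x3) + w1*(x0+x2+x3) + w2*(x0+x1+x3) + w3*(x0+x1+x2))),
    (w0 + w1 + w2 + w3).
  apply functional_extensionality. intros y.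
  unfold lagrange3, cubic, w0, w1, w2, w3, Rdiv. ring.
Qed.

Lemma sqrt2_half_sq : sqrt 2 / 2 * (sqrt 2 / 2) = 1 / 2.
Proof.
  replace (sqrt 2 / 2 * (sqrt 2 / 2)) with (sqrt 2 * sqrt 2 / 4) by field.
  rewrite sqrt_sqrt by lra. field.
Qed.

Lemma sqrt3_third_sq : sqrt 3 / 3 * (sqrt 3 / 3) = 1 / 3.
Proof.
  replace (sqrt 3 / 3 * (sqrt 3 / 3)) with (sqrt 3 * sqrt 3 / 9) by field.
  rewrite sqrt_sqrt by lra. field.
Qed.

(* The lower bound of [RInt_ge_interpolants] once p = cubic c and q = p + k y (y^2 - t^2). *)
Lemma chebyshev_pieces c0 c1 c2 c3 k a t : a * a = 1 / 2 ->
  let P := cubic_primitive c0 c1 c2 c3 in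
  let Q := cubic_primitive c0 (c1 - k * t ^ 2) c2 (c3 + k) in
  (P (- a) - P (-1)) + (Q (- t) - Q (- a)) + (P 0 - P (- t)) +
  (Q t - Q 0) + (P a - P t) + (Q 1 - Q a) =
  2 / 3 * (cubic c0 c1 c2 c3 (- a) + cubic c0 c1 c2 c3 0 + cubic c0 c1 c2 c3 a) +
  k * (1 / 8 - t ^ 4 / 2).
Proof.
  intros Ha P Q. unfold P, Q, cubic_primitive, cubic.
  replace (a ^ 4) with ((a * a) * (a * a)) by ring.
  replace ((- a) ^ 4) with ((a * a) * (a * a)) by ring.
  replace (a ^ 3) with ((a * a) * a) by ring.
  replace ((- a) ^ 3) with (- ((a * a) * a)) by ring.
  replace (a ^ 2) with (a * a) by ring.
  replace ((- a) ^ 2) with (a * a) by ring.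
  rewrite Ha. field.
Qed.

Ltac product_sign :=
  first [ apply Rmult_lt_0_compat; product_sign | apply Rmult_neg_neg; product_sign
        | apply Rmult_pos_neg; product_sign | apply Rmult_neg_pos; product_sign | lra ].

Ltac nodal4_positive := intros y Hy; unfold nodal4; product_sign.

Lemma RInt_ge_interpolants (f : R -> R) a t : m_convex_on 3 (-1) 1 f -> 0 < t < a -> a < 1 ->
  let p := lagrange3 f (- t) 0 t (- a) in
  let q := lagrange3 f (- t) 0 t a in
  RInt p (-1) (- a) + (RInt q (- a) (- t) + (RInt p (- t) 0 +
    (RInt q 0 t + (RInt p t a + RInt q a 1)))) <= RInt f (-1) 1.
Proof.
  intros hf Hta Ha1 p q.
  rewrite (RInt_split_m_convex3 (-1) 1 f hf (-1) (- a) 1),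
    (RInt_split_m_convex3 (-1) 1 f hf (- a) (- t) 1), (RInt_split_m_convex3 (-1) 1 f hf (- t) 0 1),
    (RInt_split_m_convex3 (-1) 1 f hf 0 t 1), (RInt_split_m_convex3 (-1) 1 f hf t a 1) by lra.
  repeat apply Rplus_le_compat;
    (apply (RInt_lagrange3_le (-1) 1 f hf); [interval_facts .. | nodal4_positive]).
Qed.

Lemma chebyshev_le_integral (f : R -> R) : m_convex_on 3 (-1) 1 f ->
  2 / 3 * (f (- (sqrt 2 / 2)) + f 0 + f (sqrt 2 / 2)) <= RInt f (-1) 1.
Proof.
  intros hf.
  assert (Ha : sqrt 2 / 2 * (sqrt 2 / 2) = 1 / 2) by apply sqrt2_half_sq.
  assert (Ha0 : 0 < sqrt 2 / 2) by (apply Rdiv_lt_0_compat; [apply sqrt_lt_R0 |]; lra).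
  set (a := sqrt 2 / 2) in *. clearbody a.
  (* Any t < a with 2 a (1/8 - t^4/2) >= 2/3 (1/2 - t^2) would do; see the last step. *)
  remember (7 / 10) as t eqn:Ht.
  assert (Hta : t < a < 1) by (split; nra).
  assert (Hint := RInt_ge_interpolants f a t hf ltac:(lra) ltac:(lra)). cbv zeta in Hint.
  set (D := divdiff4 f (- t) 0 t (- a) a).
  assert (HD : 0 <= D) by (apply (divdiff4_nonneg (-1) 1 f hf); interval_facts).
  destruct (lagrange3_cubic f (- t) 0 t (- a)) as (c0 & c1 & c2 & c3 & Hp).
  set (k := 2 * a * D).
  assert (Hq : lagrange3 f (- t) 0 t a = cubic c0 (c1 - k * t ^ 2) c2 (c3 + k)).
  { apply functional_extensionality. intros y.
    rewrite (lagrange3_change_node f (- t) 0 t (- a) a y) by interval_facts.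
    rewrite Hp. fold D. unfold cubic, nodal3, k. ring. }
  destruct (lagrange3_nodes f (- t) 0 t (- a)) as (_ & E0 & _ & Ema); [interval_facts |].
  assert (Ea := lagrange3_error f (- t) 0 t (- a) a ltac:(interval_facts)). fold D in Ea.
  assert (Hw : nodal4 (- t) 0 t (- a) a = 1 / 2 - t ^ 2).
  { unfold nodal4. replace ((a - - t) * (a - 0) * (a - t) * (a - - a))
      with (2 * (a * a) * (a * a - t ^ 2)) by ring.
    rewrite Ha. field. }
  rewrite Hp in E0, Ema, Ea. rewrite Hw in Ea.
  rewrite Hp, Hq, !RInt_cubic in Hint.
  assert (Hsum := chebyshev_pieces c0 c1 c2 c3 k a t Ha). cbv zeta in Hsum.
  assert (0 <= k * (1 / 8 - t ^ 4 / 2) - 2 / 3 * D * (1 / 2 - t ^ 2)).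
  { replace (k * (1 / 8 - t ^ 4 / 2) - 2 / 3 * D * (1 / 2 - t ^ 2))
      with (D * (2 * a * (1 / 8 - t ^ 4 / 2) - 2 / 3 * (1 / 2 - t ^ 2))) by (unfold k; ring).
    apply Rmult_le_pos; [exact HD | subst t; nra]. }
  lra.
Qed.

Lemma gauss_le_chebyshev (f : R -> R) : m_convex_on 3 (-1) 1 f ->
  f (- (sqrt 3 / 3)) + f (sqrt 3 / 3) <= 2 / 3 * (f (- (sqrt 2 / 2)) + f 0 + f (sqrt 2 / 2)).
Proof.
  intros hf.
  assert (Ha := sqrt2_half_sq). assert (Hb := sqrt3_third_sq).
  assert (Ha0 : 0 < sqrt 2 / 2) by (apply Rdiv_lt_0_compat; [apply sqrt_lt_R0 |]; lra).
  assert (Hb0 : 0 < sqrt 3 / 3) by (apply Rdiv_lt_0_compat; [apply sqrt_lt_R0 |]; lra).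
  set (a := sqrt 2 / 2) in *. set (b := sqrt 3 / 3) in *. clearbody a b.
  assert (Hab : b < a < 1) by (split; nra).
  assert (HD := divdiff4_nonneg (-1) 1 f hf (- a) (- b) 0 b a ltac:(lra) ltac:(lra) ltac:(lra)
                  ltac:(lra) ltac:(lra) ltac:(interval_facts)).
  rewrite divdiff4_symmetric_nodes, Ha, Hb in HD by lra.
  lra.
Qed.

Theorem proposition3 (f : R -> R) (hf : m_convex_on 3 (-1) 1 f) :
  f (- (sqrt 3 / 3)) + f (sqrt 3 / 3)
    <= 2 / 3 * (f (- (sqrt 2 / 2)) + f 0 + f (sqrt 2 / 2))
  /\ 2 / 3 * (f (- (sqrt 2 / 2)) + f 0 + f (sqrt 2 / 2)) <= RInt f (-1) 1.
Proof. split; [apply gauss_le_chebyshev | apply chebyshev_le_integral]; exact hf. Qed.
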